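(* Let $E$ be a (real) topological vector space, let $\Omega$ be a nonempty open subset of $E$, and let $f_0,\dots,f_m:\Omega\to\mathbb{R}$ be functions. Let $\hat{x}$ be a solution of the problem $$(\mathcal{P}_1)\qquad \max f_0(x)\quad\text{subject to } x\in\Omega,\ f_i(x)\ge 0\ \text{for all } i\in\{1,\dots,m\}.$$ Assume: (a) for every $j\in\{i\in\{1,\dots,m\}: f_i(\hat{x})>0\}$, $f_j$ is lower semicontinuous at $\hat{x}$; (b) for every $i\in\{0,\dots,m\}$, $f_i$ is $D^-_M$-differentiable at $\hat{x}$. Then there exist $\lambda^0,\dots,\lambda^m\in\mathbb{R}_+$ such that: (i) $(\lambda^0,\dots,\lambda^m)\neq(0,\dots,0)$; (ii) $\lambda^i f_i(\hat{x})=0$ for all $i\in\{1,\dots,m\}$; (iii) $\sum_{i=0}^m \lambda^i D^-_M f_i(\hat{x})(u)\le 0$ for all $u\in E$. If, in addition, (c) there exists $w\in E$ such that $D^-_M f_i(\hat{x})(w)>0$ for every $i\in\{1,\dots,m\}$ with $f_i(\hat{x})=0$, then one can take $\lambda^0=1$.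
   Context: For a function $f$ defined on an open set containing $x$ and a direction $u\in E$, the lower Dini derivative is $D^-f(x)(u):=\liminf_{t\to0^+}\frac{f(x+tu)-f(x)}{t}$, with the convention $D^-f(x)(0)=0$. The modified lower Dini derivative is $D^-_Mf(x)(u):=\inf_{w\in E}\{D^-f(x)(u+w)-D^-f(x)(w)\}$. The function $f$ is called $D^-_M$-differentiable at $x$ if $D^-_Mf(x)(u)$ and $D^-f(x)(u)$ are finite for every $u\in E$. *)

From HB Require Import structures.
From mathcomp Require Import all_boot all_order all_algebra.
From mathcomp Require Import all_classical all_reals all_analysis.
Set Implicit Arguments. Unset Strict Implicit. Unset Printing Implicit Defensive.
Import Order.TTheory GRing.Theory Num.Theory.
Import numFieldNormedType.Exports.
Local Open Scope classical_set_scope.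
Local Open Scope ring_scope.

(* Lower Dini derivative D^-f(x)(u) = liminf_{t -> 0+} (f(x+tu)-f(x))/t,
   written as sup_{d>0} inf_{0<t<d} of the difference quotient, in \bar R. *)
Definition lower_dini (R : realType) (E : topologicalLmodType R)
    (f : E -> R) (x u : E) : \bar R :=
  ereal_sup [set ereal_inf [set ((f (x + t *: u) - f x) / t)%:E | t in `]0, d[ ]
            | d in `]0, +oo[ ].

Definition mod_lower_dini (R : realType) (E : topologicalLmodType R)
    (f : E -> R) (x u : E) : \bar R :=
  ereal_inf [set (lower_dini f x (u + w)%R - lower_dini f x w)%E | w in [set: E]].

Definition DM_differentiable (R : realType) (E : topologicalLmodType R)
    (f : E -> R) (x : E) : Prop :=
  forall u : E, mod_lower_dini f x u \is a fin_num /\ lower_dini f x u \is a fin_num.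

Definition lsc_at (R : realType) (E : topologicalLmodType R) (f : E -> R) (x : E) : Prop :=
  forall e : R, 0 < e -> \forall y \near x, f x - e < f y.

Definition solves_P1 (R : realType) (E : topologicalLmodType R) (m : nat)
    (Om : set E) (f0 : E -> R) (f : 'I_m -> E -> R) (xhat : E) : Prop :=
  [/\ Om xhat, (forall i, 0 <= f i xhat) &
      forall x, Om x -> (forall i, 0 <= f i x) -> f0 x <= f0 xhat].

From HB Require Import structures.
From mathcomp Require Import all_boot all_order all_algebra.
From mathcomp Require Import all_classical all_reals all_analysis.
From mathcomp Require Import ring lra.
Set Implicit Arguments.
Unset Strict Implicit.
Unset Printing Implicit Defensive.
Import Order.TTheory GRing.Theory Num.Theory.
Import numFieldNormedType.Exports.
Local Open Scope classical_set_scope.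
Local Open Scope ring_scope.

(* At a solution no direction u can make D^- f0(xhat)(u) and D^- f_j(xhat)(u), for all
   active j, positive at once: a small step along u would stay in Om, keep the inactive
   constraints positive by lower semicontinuity and the active ones nonnegative, and
   increase f0. Since D^-_M f <= D^- f, the same holds for the modified derivatives, which
   are superadditive and positively homogeneous, hence concave. A Gordan-type alternative
   for finitely many concave functions then produces a convex combination of the D^-_M f_i
   (objective and active constraints) that is nonpositive everywhere. Under (c), a zero
   weight on f0 would make this combination positive at w. *)

Lemma sumr_delta (R : pzSemiRingType) (I : finType) (k : I) (F : I -> R) :
  \sum_i (i == k)%:R * F i = F k.
Proof.
rewrite (bigD1 k) //= eqxx mul1r big1 ?addr0 // => i /negbTE ->.
by rewrite mul0r.
Qed.

Section Concavity.
Variables (R : realType) (E : lmodType R).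

Definition is_convex (D : set E) := forall a b s, D a -> D b -> 0 < s < 1 ->
  D (s *: a + (1 - s) *: b).

Definition is_concave (D : set E) (h : E -> R) := forall a b s, D a -> D b -> 0 < s < 1 ->
  s * h a + (1 - s) * h b <= h (s *: a + (1 - s) *: b).

Lemma superlinear_concave (h : E -> R) :
  (forall u v, h u + h v <= h (u + v)) -> (forall s u, 0 < s -> s * h u <= h (s *: u)) ->
  is_concave setT h.
Proof.
move=> hD hZ a b s _ _ /andP[s0 s1].
by apply: le_trans (hD _ _); apply: lerD; apply: hZ; lra.
Qed.

Lemma is_convex_superlevel (D : set E) (g : E -> R) :
  is_convex D -> is_concave D g -> is_convex [set u | D u /\ 0 < g u].
Proof.
move=> cD cg a b s [Da ga] [Db gb] s01; split; first exact: cD.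
apply: lt_le_trans (cg _ _ _ Da Db s01).
by case/andP: s01 => s0 s1; apply: addr_gt0; apply: mulr_gt0 => //; lra.
Qed.

Lemma is_concave_sum (I : finType) (D : set E) (c : I -> R) (g : I -> E -> R) :
  (forall i, 0 <= c i) -> (forall i, c i != 0 -> is_concave D (g i)) ->
  is_concave D (fun u => \sum_i c i * g i u).
Proof.
move=> c0 cg a b s Da Db s01; rewrite !mulr_sumr -big_split /=.
apply: ler_sum => i _; have [->|ci] := eqVneq (c i) 0; first by rewrite !(mul0r, mulr0) addr0.
rewrite mulrCA [(1 - s) * _]mulrCA -mulrDr.
exact/ler_wpM2l/cg.
Qed.

Section TwoFunctions.
Variables (D : set E) (h g : E -> R).
Hypotheses (cD : is_convex D) (ch : is_concave D h) (cg : is_concave D g).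
Hypothesis hg_le0 : forall u, D u -> h u <= 0 \/ g u <= 0.

(* Otherwise the point of the segment [p, q] where the chords of [h] and [g]
   take the same value would make both [h] and [g] positive. *)
Lemma concave_cross_le p q : D p -> D q -> 0 < h p -> 0 < g q ->
  g q * h p <= g p * h q.
Proof.
move=> Dp Dq hp gq.
have gp : g p <= 0 by case: (hg_le0 Dp) => //; rewrite leNgt hp.
have hq : h q <= 0 by case: (hg_le0 Dq) => //; rewrite leNgt gq.
rewrite leNgt; apply/negP => lt.
pose N := h p - h q - g p + g q.
have N0 : 0 < N by rewrite /N; lra.
pose s := (g q - h q) / N.
have s01 : 0 < s < 1.
  by rewrite divr_gt0 ?ltr_pdivrMr //= ?mul1r /N; lra.
have chord k : s * k p + (1 - s) * k q = (k p * (g q - h q) + k q * (h p - g p)) / N.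
  by rewrite /s /N; field; rewrite -/N gt_eqF.
pose v := s * h p + (1 - s) * h q.
have vg : v = s * g p + (1 - s) * g q by rewrite /v !chord; congr (_ / _); ring.
have v0 : 0 < v by rewrite /v chord divr_gt0 //; nra.
have Dv := cD Dp Dq s01.
case: (hg_le0 Dv); apply/negP; rewrite -ltNge.
  exact: lt_le_trans v0 (ch Dp Dq s01).
by rewrite vg in v0; apply: lt_le_trans v0 (cg Dp Dq s01).
Qed.

(* The weight is the supremum of [g q / (g q - h q)] over the [q] with [g q > 0]. *)
Lemma concave_alternative2 :
  exists2 al, 0 <= al <= 1 & forall u, D u -> al * h u + (1 - al) * g u <= 0.
Proof.
have [[q0 [Dq0 gq0]]|nQ] := pselect (exists q, D q /\ 0 < g q); last first.
  exists 0 => [|u Du]; rewrite ?lexx ?ler01 // mul0r add0r subr0 mul1r.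
  by rewrite leNgt; apply/negP => gu; apply: nQ; exists u.
have hQ q : D q -> 0 < g q -> h q <= 0.
  by move=> Dq gq; case: (hg_le0 Dq) => //; rewrite leNgt gq.
pose A := [set g q / (g q - h q) | q in [set q | D q /\ 0 < g q]].
have A1 : ubound A 1.
  move=> _ [q [Dq gq] <-]; have := hQ q Dq gq => hq.
  by rewrite ler_pdivrMr ?mul1r; lra.
have supA : has_sup A by split; [exists (g q0 / (g q0 - h q0)); exists q0 | exists 1].
have Aq q : D q -> 0 < g q -> g q / (g q - h q) <= sup A.
  by move=> Dq gq; apply: sup_upper_bound => //; exists q.
have al0 : 0 <= sup A.
  apply: le_trans (Aq _ Dq0 gq0).
  by apply: divr_ge0; [lra | have := hQ q0 Dq0 gq0; lra].
have al1 : sup A <= 1 by rewrite ge_sup //; case: supA.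
exists (sup A) => [|u Du]; first by rewrite al0 al1.
have [gu|gu] := ltP 0 (g u).
  have hu := hQ u Du gu.
  have := Aq u Du gu; rewrite ler_pdivrMr; last lra.
  by move=> ?; nra.
have [hu|hu] := ltP 0 (h u); last nra.
have : sup A <= - g u / (h u - g u).
  apply: ge_sup => [|_ [q [Dq gq] <-]]; first by case: supA.
  have hq := hQ q Dq gq.
  rewrite ler_pdivrMr; last lra.
  rewrite mulrAC ler_pdivlMr; last lra.
  by have := concave_cross_le Du Dq hu gq; nra.
by rewrite ler_pdivlMr; [nra | lra].
Qed.

End TwoFunctions.

(* By induction on #|S|: for k in S, the induction hypothesis on the part of D where
   g k > 0 yields a combination of the other g i, which concave_alternative2 mixes with
   g k. *)
Lemma concave_alternative (I : finType) (S : {set I}) (D : set E) (g : I -> E -> R) :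
  (0 < #|S|)%N -> is_convex D -> (forall i, i \in S -> is_concave D (g i)) ->
  (forall u, D u -> exists2 i, i \in S & g i u <= 0) ->
  exists lam : I -> R, [/\ forall i, 0 <= lam i, forall i, i \notin S -> lam i = 0,
    \sum_i lam i = 1 & forall u, D u -> \sum_i lam i * g i u <= 0].
Proof.
have [n] := ubnP #|S|; elim: n S D => // n IH S D ltSn S0 cD cg Hg.
have /card_gt0P[k kS] := S0.
have deltaP i : 0 <= (i == k)%:R :> R by case: (i == k).
have delta_supp i : i \notin S -> (i == k)%:R = 0 :> R.
  by case: eqP => // ->; rewrite kS.
have sum_delta : \sum_i (i == k)%:R = 1 :> R.
  by under eq_bigr do rewrite -[_%:R]mulr1; exact: sumr_delta.
pose S' := S :\ k.
have S'S i : i \in S' -> i \in S by rewrite in_setD1 => /andP[].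
have [S'0|S'0] := posnP #|S'|.
  exists (fun i => (i == k)%:R); split => // u Du; rewrite sumr_delta.
  have [i iS giu] := Hg u Du; suff <- : i = k by [].
  by have := card0_eq S'0 i; rewrite in_setD1 iS andbT inE => /negbFE/eqP.
pose D' := [set u | D u /\ 0 < g k u].
have ltS'n : (#|S'| < n)%N by move: ltSn; rewrite (cardsD1 k S) kS.
have cD' : is_convex D' := is_convex_superlevel cD (cg k kS).
have cg' i : i \in S' -> is_concave D' (g i).
  by move=> /S'S iS a b s [Da _] [Db _]; exact: cg.
have Hg' u : D' u -> exists2 i, i \in S' & g i u <= 0.
  move=> [Du gku]; have [i iS giu] := Hg u Du; exists i => //.
  by rewrite in_setD1 iS andbT; apply: contraTneq giu => ->; rewrite -ltNge.
have [mu [mu0 muS mu1 muD']] := IH S' D' ltS'n S'0 cD' cg' Hg'.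
have cmu : is_concave D (fun u => \sum_i mu i * g i u).
  apply: is_concave_sum => // i mui; apply/cg/S'S.
  by apply: contraNT mui => /muS ->.
have [al /andP[al0 al1] alD] : exists2 al, 0 <= al <= 1 & forall u, D u ->
    al * (\sum_i mu i * g i u) + (1 - al) * g k u <= 0.
  apply: concave_alternative2 cD cmu (cg k kS) _ => u Du.
  by have [gku|] := ltP 0 (g k u); [left; apply: muD' | right].
exists (fun i => al * mu i + (1 - al) * (i == k)%:R); split.
- by move=> i; apply: addr_ge0; apply: mulr_ge0 => //; lra.
- by move=> i iS; rewrite delta_supp // muS ?mulr0 ?addr0 //; apply: contra iS; exact: S'S.
- by rewrite big_split /= -!mulr_sumr mu1 sum_delta !mulr1 addrC subrK.
move=> u Du; suff -> : \sum_i (al * mu i + (1 - al) * (i == k)%:R) * g i u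
    = al * (\sum_i mu i * g i u) + (1 - al) * g k u by exact: alD.
rewrite mulr_sumr -(sumr_delta k (fun i => (1 - al) * g i u)) -big_split /=.
by apply: eq_bigr => i _; ring.
Qed.

End Concavity.

Section LowerDini.
Variables (R : realType) (E : topologicalLmodType R) (f : E -> R) (x : E).
Local Notation D := (lower_dini f x).

Lemma lower_dini0 : D 0 = 0%E.
Proof.
have q0 t : ((f (x + t *: 0) - f x) / t)%:E = 0%E by rewrite scaler0 addr0 subrr mul0r.
apply/eqP; rewrite eq_le; apply/andP; split.
  apply: ge_ereal_sup => _ [d d0 <-]; rewrite /= in_itv /= andbT in d0.
  rewrite -(q0 (d / 2)); apply: ereal_inf_lbound; exists (d / 2) => //.
  by rewrite /= in_itv /=; apply/andP; split; lra.
apply: le_trans (ereal_sup_ubound _); last by exists 1 => //; rewrite /= in_itv /= andbT.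
by apply: le_ereal_inf_tmp => _ [t _ <-]; rewrite q0.
Qed.

Lemma mod_lower_dini_le u : (mod_lower_dini f x u <= D u)%E.
Proof. by apply: ereal_inf_lbound; exists 0 => //; rewrite addr0 lower_dini0 sube0. Qed.

Lemma lower_dini_gt0 u : (0 < D u)%E -> \forall t \near 0^'+, f x < f (x + t *: u).
Proof.
move=> /ereal_sup_gt[_ [d d0 <-] Id]; rewrite /= in_itv /= andbT in d0.
near=> t.
have t0 : 0 < t by near: t; exact: nbhs_right_gt.
have td : t < d by near: t; exact: nbhs_right_lt.
have : (0 < ((f (x + t *: u) - f x) / t)%:E)%E.
  by apply: lt_le_trans Id _; apply: ereal_inf_lbound; exists t; rewrite //= in_itv /= t0 td.
by rewrite lte_fin pmulr_lgt0 ?invr_gt0 // subr_gt0.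
Unshelve. all: by end_near.
Qed.

(* The quotients of [s *: v] on ]0, d / s[ are [s] times those of [v] on ]0, d[. *)
Lemma lower_dini_scale_ge s v : 0 < s -> D v \is a fin_num -> D (s *: v) \is a fin_num ->
  s * fine (D v) <= fine (D (s *: v)).
Proof.
move=> s0 fv fsv.
set c := fine (D (s *: v)).
have Dsv : D (s *: v) = c%:E by rewrite /c fineK.
suff : (D v <= (c / s)%:E)%E by rewrite -(fineK fv) lee_fin ler_pdivlMr // mulrC.
apply: ge_ereal_sup => _ [d d0 <-]; rewrite /= in_itv /= andbT in d0.
set I := ereal_inf _.
have hI t : 0 < t < d -> (I <= ((f (x + t *: v) - f x) / t)%:E)%E.
  by move=> td; apply: ereal_inf_lbound; exists t => //; rewrite /= in_itv /=.
move: I hI => [r| |] hI; last by rewrite leNye.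
- suff : ((r * s)%:E <= c%:E)%E by rewrite !lee_fin ler_pdivlMr.
  rewrite -Dsv; apply: le_trans (ereal_sup_ubound _); last first.
    by exists (d / s) => //; rewrite /= in_itv /= andbT divr_gt0.
  apply: le_ereal_inf_tmp => _ [t + <-]; rewrite /= in_itv /= lee_fin => /andP[t0 td].
  have := hI (t * s); rewrite mulr_gt0 //= -ltr_pdivlMr // td lee_fin scalerA.
  move=> /(_ isT) hr.
  have -> : (f (x + (t * s) *: v) - f x) / t
          = s * ((f (x + (t * s) *: v) - f x) / (t * s)) by field; rewrite !gt_eqF.
  by rewrite mulrC ler_pM2l.
- have /hI : 0 < d / 2 < d by apply/andP; split; lra.
  by rewrite leye_eq.
Qed.

Lemma lower_diniZ s v : 0 < s -> (forall w, D w \is a fin_num) ->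
  fine (D (s *: v)) = s * fine (D v).
Proof.
move=> s0 hD; apply/eqP; rewrite eq_le lower_dini_scale_ge // andbT.
have := @lower_dini_scale_ge s^-1 (s *: v).
rewrite invr_gt0 scalerA mulVf ?gt_eqF // scale1r ler_pdivrMl //.
by rewrite mulrC; apply.
Qed.

Hypothesis hf : DM_differentiable f x.
Local Notation M u := (fine (mod_lower_dini f x u)).
Local Notation Df v := (fine (D v)).

Lemma mod_lower_dini_le_sub u w : M u <= Df (u + w) - Df w.
Proof.
rewrite -lee_fin fineK ?(proj1 (hf u)) // EFinB !fineK ?(proj2 (hf _)) //.
by apply: ereal_inf_lbound; exists w.
Qed.

Lemma mod_lower_dini_ge u c : (forall w, c <= Df (u + w) - Df w) -> c <= M u.
Proof.
move=> h; rewrite -lee_fin fineK ?(proj1 (hf u)) //.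
apply: le_ereal_inf_tmp => _ [w _ <-].
by rewrite -(fineK (proj2 (hf w))) -(fineK (proj2 (hf (u + w)))) -EFinB lee_fin.
Qed.

Lemma mod_lower_dini_superadditive u v : M u + M v <= M (u + v).
Proof.
apply: mod_lower_dini_ge => w.
have := mod_lower_dini_le_sub u (v + w); have := mod_lower_dini_le_sub v w.
by rewrite addrA; lra.
Qed.

Lemma mod_lower_dini_scale_ge s u : 0 < s -> s * M u <= M (s *: u).
Proof.
move=> s0; apply: mod_lower_dini_ge => w.
have -> : w = s *: (s^-1 *: w) by rewrite scalerA mulfV ?gt_eqF // scale1r.
have hD v : D v \is a fin_num by case: (hf v).
set w' := s^-1 *: w.
rewrite -scalerDr !(lower_diniZ _ s0 hD) -mulrBr ler_pM2l //.
exact: mod_lower_dini_le_sub.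
Qed.

Lemma mod_lower_dini_concave : is_concave setT (fun u => M u).
Proof.
apply: superlinear_concave; [exact: mod_lower_dini_superadditive|].
exact: mod_lower_dini_scale_ge.
Qed.

End LowerDini.

Lemma cvg_ray (R : realType) (E : topologicalLmodType R) (x u : E) :
  (fun t : R => x + t *: u) @ 0^'+ --> x.
Proof.
have tu : (fun t : R => (t : R^o) *: u) @ (0 : R) --> (0 : R^o) *: u.
  apply: (@continuous2_cvg _ _ _ _ _ _ (fun t : R => t : R^o) (fun=> u) ( *:%R)).
  - exact: (@scale_continuous R E ((0 : R^o), u)).
  - exact: cvg_id.
  - exact: cvg_cst.
have xtu : (fun t : R => x + t *: u) @ (0 : R) --> x + 0 *: u.
  apply: (@continuous2_cvg _ _ _ _ _ _ (fun=> x) (fun t : R => t *: u) +%R).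
  - exact: (@add_continuous E (x, 0 *: u)).
  - exact: cvg_cst.
  - exact: tu.
rewrite scale0r addr0 in xtu.
by apply: cvg_trans xtu; apply: cvg_app; exact: cvg_within.
Qed.

Section FritzJohn.
Variables (R : realType) (E : topologicalLmodType R) (Om : set E) (m : nat).
Variables (f0 : E -> R) (f : 'I_m -> E -> R) (xhat : E).
Local Notation M g u := (fine (mod_lower_dini g xhat u)).

Lemma multiplier0_gt0 lam0 (lam : 'I_m -> R) w :
  0 <= lam0 -> (forall i, 0 <= lam i) -> lam0 + \sum_i lam i = 1 ->
  (forall i, f i xhat != 0 -> lam i = 0) ->
  (forall u, lam0 * M f0 u + \sum_i lam i * M (f i) u <= 0) ->
  (forall i, f i xhat = 0 -> 0 < M (f i) w) -> 0 < lam0.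
Proof.
move=> lam00 lam0i lam1 lamS lamD Mw; rewrite lt_neqAle lam00 andbT eq_sym.
apply/negP => /eqP lam0_eq0; move: lam1 (lamD w); rewrite lam0_eq0 mul0r !add0r.
have terms i : 0 <= lam i * M (f i) w.
  by have [/Mw/ltW|/lamS->] := eqVneq (f i xhat) 0; [exact: mulr_ge0 | rewrite mul0r].
move=> lam1 sum_le0.
have sum_eq0 : \sum_i lam i * M (f i) w = 0.
  by apply/le_anti; rewrite sum_le0 sumr_ge0.
have sum0 := psumr_eq0P (fun i _ => terms i) sum_eq0.
move: lam1; rewrite big1 => [/eqP|i _]; first by rewrite eq_sym oner_eq0.
have [fi0|/lamS//] := eqVneq (f i xhat) 0.
by have /eqP := sum0 i isT; rewrite mulf_eq0 (gt_eqF (Mw _ fi0)) orbF => /eqP.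
Qed.

Hypotheses (oOm : open Om) (sol : solves_P1 Om f0 f xhat).
Hypothesis lsc : forall j, 0 < f j xhat -> lsc_at (f j) xhat.

Lemma no_ascent_direction u : (0 < lower_dini f0 xhat u)%E ->
  exists2 j, f j xhat = 0 & (lower_dini (f j) xhat u <= 0)%E.
Proof.
move=> f0u; have [//|noj] := pselect (exists2 j, f j xhat = 0 &
  (lower_dini (f j) xhat u <= 0)%E); exfalso.
have ascent j : f j xhat = 0 -> (0 < lower_dini (f j) xhat u)%E.
  by move=> fj0; rewrite ltNge; apply/negP => le0; apply: noj; exists j.
case: sol => Omx fx0 opt; have ray := @cvg_ray _ _ xhat u.
have inOm : \forall t \near 0^'+, Om (xhat + t *: u) by apply: ray; exact: open_nbhs_nbhs.
have feasible : \forall t \near 0^'+, forall j, 0 <= f j (xhat + t *: u).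
  apply: filter_forall => j; have [fj|fj] := ltP 0 (f j xhat).
    have : \forall t \near 0^'+, f j xhat - f j xhat < f j (xhat + t *: u).
      exact: ray _ (lsc fj fj).
    by apply: filterS => t; rewrite subrr => /ltW.
  have fj0 : f j xhat = 0 by apply/le_anti; rewrite fj fx0.
  by apply: filterS (lower_dini_gt0 (ascent j fj0)) => t; rewrite fj0 => /ltW.
have [t [[Omt ft] f0t]] := filter_ex (filterI (filterI inOm feasible) (lower_dini_gt0 f0u)).
by have := opt _ Omt ft; rewrite leNgt f0t.
Qed.

Hypotheses (hf0 : DM_differentiable f0 xhat) (hf : forall i, DM_differentiable (f i) xhat).

Lemma fritz_john_multipliers : exists (lam0 : R) (lam : 'I_m -> R),
  [/\ 0 <= lam0, forall i, 0 <= lam i, lam0 + \sum_i lam i = 1,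
      forall i, f i xhat != 0 -> lam i = 0 &
      forall u, lam0 * M f0 u + \sum_i lam i * M (f i) u <= 0].
Proof.
pose F i := if unlift ord0 i is Some j then f j else f0.
have F0 : F ord0 = f0 by rewrite /F /= unlift_none.
have Fl j : F (lift ord0 j) = f j by rewrite /F /= liftK.
pose S := [set i | if unlift ord0 i is Some j then f j xhat == 0 else true]%SET.
have S0 : ord0 \in S by rewrite /S inE unlift_none.
have S_gt0 : (0 < #|S|)%N by apply/card_gt0P; exists ord0.
have convexT : is_convex (@setT E) by [].
have concaveF i : i \in S -> is_concave setT (fun u => M (F i) u).
  by move=> _; apply: mod_lower_dini_concave; rewrite /F; case: unlift.
have no_ascent u : setT u -> exists2 i, i \in S & M (F i) u <= 0.
  move=> _; have [M0le|M0gt] := leP (M f0 u) 0; first by exists ord0; rewrite // F0.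
  have f0u : (0 < mod_lower_dini f0 xhat u)%E.
    by rewrite -(fineK (proj1 (hf0 u))) lte_fin.
  have [j fj0 Dj] := no_ascent_direction (lt_le_trans f0u (mod_lower_dini_le _ _ _)).
  exists (lift ord0 j); first by rewrite /S inE liftK fj0.
  rewrite Fl -lee_fin fineK ?(proj1 (hf j u)) //.
  exact: le_trans (mod_lower_dini_le _ _ _) Dj.
have [lam [lam0 lamS lam1 lamD]] := concave_alternative S_gt0 convexT concaveF no_ascent.
exists (lam ord0), (fun j => lam (lift ord0 j)); split => //.
- by rewrite -big_ord_recl.
- by move=> j fj; apply: lamS; rewrite /S inE liftK (negbTE fj).
move=> u; have := lamD u I; rewrite big_ord_recl F0.
by under eq_bigr do rewrite Fl.
Qed.

Lemma lagrangianE (l0 : R) (l : 'I_m -> R) u :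
  (l0%:E * mod_lower_dini f0 xhat u + \sum_i (l i)%:E * mod_lower_dini (f i) xhat u)%E
  = (l0 * M f0 u + \sum_i l i * M (f i) u)%:E.
Proof.
rewrite EFinD EFinM fineK ?(proj1 (hf0 u)) // -sumEFin.
by congr (_ + _)%E; apply: eq_bigr => i _; rewrite EFinM fineK // (proj1 (hf i u)).
Qed.

Lemma kuhn_tucker_multipliers :
  (exists w, forall i, f i xhat = 0 -> (0 < mod_lower_dini (f i) xhat w)%E) ->
  exists lam : 'I_m -> R, [/\ forall i, 0 <= lam i, forall i, f i xhat != 0 -> lam i = 0 &
    forall u, M f0 u + \sum_i lam i * M (f i) u <= 0].
Proof.
move=> [w hw]; have [lam0 [lam [lam00 lam0i lam1 lamS lamD]]] := fritz_john_multipliers.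
have Mw i : f i xhat = 0 -> 0 < M (f i) w.
  by move=> /hw; rewrite -(fineK (proj1 (hf i w))) lte_fin.
have lam0_gt0 := multiplier0_gt0 lam00 lam0i lam1 lamS lamD Mw.
exists (fun i => lam i / lam0); split => [i|i /lamS->|u]; first exact: divr_ge0.
  by rewrite mul0r.
rewrite -(pmulr_rle0 _ lam0_gt0) mulrDr mulr_sumr.
under eq_bigr do rewrite mulrA [lam0 * _]mulrC (divfK (lt0r_neq0 lam0_gt0)).
exact: lamD.
Qed.

End FritzJohn.

Theorem theorem1p1 (R : realType) (E : topologicalLmodType R) (Om : set E)
    (m : nat) (f0 : E -> R) (f : 'I_m -> E -> R) (xhat : E) :
  Om !=set0 -> open Om ->
  solves_P1 Om f0 f xhat ->
  (forall j, 0 < f j xhat -> lsc_at (f j) xhat) ->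
  DM_differentiable f0 xhat ->
  (forall i, DM_differentiable (f i) xhat) ->
  (exists (lam0 : R) (lam : 'I_m -> R),
     [/\ 0 <= lam0, (forall i, 0 <= lam i),
         (lam0 != 0 \/ exists i, lam i != 0),
         (forall i, lam i * f i xhat = 0) &
         forall u : E,
           ((lam0%:E * mod_lower_dini f0 xhat u
             + \sum_(i < m) (lam i)%:E * mod_lower_dini (f i) xhat u) <= 0)%E])
  /\
  ((exists w : E, forall i, f i xhat = 0 -> (0 < mod_lower_dini (f i) xhat w)%E) ->
   exists lam : 'I_m -> R,
     [/\ (forall i, 0 <= lam i),
         (forall i, lam i * f i xhat = 0) &
         forall u : E,
           ((mod_lower_dini f0 xhat u
             + \sum_(i < m) (lam i)%:E * mod_lower_dini (f i) xhat u) <= 0)%E]).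
Proof.
move=> _ oOm sol lsc hf0 hf; split.
  have [lam0 [lam [lam00 lam0i lam1 lamS lamD]]] := fritz_john_multipliers oOm sol lsc hf0 hf.
  exists lam0, lam; split => // [|i|u]; last by rewrite lagrangianE // lee_fin.
  - have [lam0_eq0|] := eqVneq lam0 0; [right | by left].
    apply: contrapT => lam_eq0; move: lam1; rewrite lam0_eq0 add0r big1 => [/eqP|i _].
      by rewrite eq_sym oner_eq0.
    by apply: contrapT => lam_i; apply: lam_eq0; exists i; apply/eqP.
  - by have [->|/lamS->] := eqVneq (f i xhat) 0; rewrite ?mulr0 ?mul0r.
move=> qualified.
have [lam [lam0i lamS lamD]] := kuhn_tucker_multipliers oOm sol lsc hf0 hf qualified.
exists lam; split => // [i|u].
  by have [->|/lamS->] := eqVneq (f i xhat) 0; rewrite ?mulr0 ?mul0r.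
by rewrite -[mod_lower_dini f0 xhat u]mul1e lagrangianE // mul1r lee_fin.
Qed.
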